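(* Let $A$ be a unital $*$-ring which is not $*$-symmetric. Then for every integer $n>1$, the matrix ring $\mathbb M_n(A)$ with the $*$-transpose involution is not a Rickart $*$-ring.
   Context: A unital $*$-ring $A$ is $*$-symmetric if $1+xx^*$ is invertible for every $x\in A$. The $*$-transpose involution on $\mathbb M_n(A)$ is $(a_{ij})^*=(a_{ji}^* )$. A Rickart $*$-ring is a $*$-ring in which the right annihilator of every element is generated as a right ideal by a projection ($p=p^2=p^*$). *)

From HB Require Import structures.
From mathcomp Require Import all_boot all_order all_algebra.
Set Implicit Arguments. Unset Strict Implicit. Unset Printing Implicit Defensive.
Import GRing.Theory.
Local Open Scope ring_scope.

Definition is_involution (R : pzRingType) (star : R -> R) : Prop :=
  [/\ forall x y, star (x + y) = star x + star y,
      forall x y, star (x * y) = star y * star x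
    & forall x, star (star x) = x].

Definition invertible (R : pzRingType) (a : R) : Prop :=
  exists b : R, a * b = 1 /\ b * a = 1.

Definition star_symmetric (R : pzRingType) (star : R -> R) : Prop :=
  forall x : R, invertible (1 + x * star x).

Definition is_projection (R : pzRingType) (star : R -> R) (p : R) : Prop :=
  p * p = p /\ star p = p.

Definition rickart (R : pzRingType) (star : R -> R) : Prop :=
  forall x : R, exists p : R, is_projection star p /\
    (forall y : R, x * y = 0 <-> exists z : R, y = p * z).

Definition mxstar (R : pzRingType) (star : R -> R) (n : nat)
  (M : 'M[R]_n) : 'M[R]_n := \matrix_(i < n, j < n) star (M j i).

From HB Require Import structures.
From mathcomp Require Import all_boot all_order all_algebra.
Local Open Scope ring_scope.
Import GRing.Theory.

Set Implicit Arguments.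
Unset Strict Implicit.
Unset Printing Implicit Defensive.

(* Given x in A, put a := star x and take X with first row (1, a, 0, ..., 0) and V with
   first column (-a, 1, 0, ..., 0), all other entries 0, so that X V = 0.  If the right
   annihilator of X were P M_n(A) for a projection P, then X P = 0 forces the first row
   of P to be -a times its second row, and P V = V read at the entry (2, 1) becomes
   P_22 (1 + x (star x)) = 1; as P_22 and 1 + x (star x) are self-adjoint, the latter
   is invertible. *)

Section Involution.
Variables (R : pzRingType) (star : R -> R).
Hypothesis star_inv : is_involution star.

Lemma star0 : star 0 = 0.
Proof.
have [starD _ _] := star_inv.
by apply: (addIr (star 0)); rewrite -starD !addr0 add0r.
Qed.

Lemma starN (a : R) : star (- a) = - star a.
Proof.
have [starD _ _] := star_inv.
by apply: (addIr (star a)); rewrite -starD !addNr star0.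
Qed.

Lemma star1 : star 1 = 1.
Proof.
have [_ starM starK] := star_inv.
have e : star (1 * star 1) = star 1 by rewrite starM starK mul1r.
by rewrite mul1r starK in e.
Qed.

Lemma invertible_selfadjoint (a b : R) :
  star a = a -> star b = b -> b * a = 1 -> invertible a.
Proof.
have [_ starM _] := star_inv.
move=> sa sb ba; exists b; split=> //.
by rewrite -sa -sb -starM ba star1.
Qed.

End Involution.

Lemma rickart_rann_projection (R : pzRingType) (star : R -> R) :
  rickart star -> forall x : R, exists p : R,
    [/\ is_projection star p, x * p = 0 & forall v, x * v = 0 -> p * v = v].
Proof.
move=> rick x; have [p [[pp sp] rann]] := rick x.
exists p; split=> //; first by apply/rann; exists 1; rewrite mulr1.
by move=> v /rann [z ->]; rewrite mulrA pp.
Qed.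

Lemma mxstar_fixed_entry (R : pzRingType) (star : R -> R) (n : nat) (M : 'M[R]_n) i j :
  mxstar star M = M -> M i j = star (M j i).
Proof. by move=> sM; rewrite -{1}sM mxE. Qed.

Lemma sum_ord_pair (R : nmodType) (n : nat) (F : 'I_n -> R) (a b : 'I_n) :
  a != b -> (forall k, k != a -> k != b -> F k = 0) -> \sum_k F k = F a + F b.
Proof.
move=> ab F0; rewrite (bigD1 a) //= (bigD1 b) 1?eq_sym //= big1 ?addr0 //.
by move=> k /andP [kb ka]; apply: F0.
Qed.

Section MatrixCorner.
Variables (A : pzRingType) (m : nat).

Local Notation i0 := (@ord0 m.+1).
Local Notation i1 := (@Ordinal m.+2 1 isT).

Definition top_row_mx (a : A) : 'M[A]_m.+2 := \matrix_(i, j)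
  (if i == i0 then (if j == i0 then 1 else if j == i1 then a else 0) else 0).

Definition left_col_mx (a : A) : 'M[A]_m.+2 := \matrix_(i, j)
  (if j == i0 then (if i == i0 then - a else if i == i1 then 1 else 0) else 0).

Lemma mul_top_row_mx (a : A) (M : 'M[A]_m.+2) i j :
  (top_row_mx a *m M) i j = if i == i0 then M i0 j + a * M i1 j else 0.
Proof.
rewrite mxE; case: eqP => [-> | /eqP i_neq0].
  rewrite (@sum_ord_pair _ _ _ i0 i1) // ?mxE ?eqxx /= ?mul1r //.
  by move=> k k0 k1; rewrite mxE eqxx (negbTE k0) (negbTE k1) mul0r.
by rewrite big1 // => k _; rewrite mxE (negbTE i_neq0) mul0r.
Qed.

Lemma mul_left_col_mx (a : A) (M : 'M[A]_m.+2) i j :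
  (M *m left_col_mx a) i j = if j == i0 then M i i1 - M i i0 * a else 0.
Proof.
rewrite mxE; case: eqP => [-> | /eqP j_neq0].
  rewrite (@sum_ord_pair _ _ _ i0 i1) // ?mxE ?eqxx /= ?mulr1 ?mulrN 1?addrC //.
  by move=> k k0 k1; rewrite mxE eqxx (negbTE k0) (negbTE k1) mulr0.
by rewrite big1 // => k _; rewrite mxE (negbTE j_neq0) mulr0.
Qed.

Lemma mul_top_row_left_col_mx (a : A) : top_row_mx a *m left_col_mx a = 0.
Proof.
apply/matrixP => i j; rewrite mul_top_row_mx !mxE.
by case: (i == i0); case: (j == i0); rewrite /= ?mulr1 ?mulr0 ?addNr ?addr0.
Qed.

Variable star : A -> A.
Hypothesis star_inv : is_involution star.

Lemma corner_left_inverse (a : A) (P : 'M[A]_m.+2) :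
  is_projection (@mxstar A star m.+2) P ->
  top_row_mx a *m P = 0 -> P *m left_col_mx a = left_col_mx a ->
  P i1 i1 * (1 + star a * a) = 1.
Proof.
have [_ starM _] := star_inv.
move=> [_ sP] XP PV.
have P_adj i j := mxstar_fixed_entry i j sP.
have P_row0 j : P i0 j = - (a * P i1 j).
  apply/eqP; rewrite -addr_eq0.
  have := congr1 (fun M : 'M_m.+2 => M i0 j) XP.
  by rewrite mul_top_row_mx /= mxE => ->.
have P10 : P i1 i0 = - (P i1 i1 * star a).
  by rewrite P_adj P_row0 (starN star_inv) starM -P_adj.
have := congr1 (fun M : 'M_m.+2 => M i1 i0) PV; rewrite mul_left_col_mx /= !mxE /=.
by rewrite P10 mulNr opprK mulrDr mulr1 mulrA.
Qed.

Lemma rickart_mxstar_star_symmetric :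
  rickart (@mxstar A star m.+2) -> star_symmetric star.
Proof.
have [starD starM starK] := star_inv.
move=> rick x.
have [P [projP XP PV]] := rickart_rann_projection rick (top_row_mx (star x)).
have left_inv := corner_left_inverse projP XP (PV _ (mul_top_row_left_col_mx _)).
rewrite starK in left_inv.
apply: (invertible_selfadjoint star_inv) left_inv.
- by rewrite starD (star1 star_inv) starM starK.
- by case: projP => _ /(mxstar_fixed_entry i1 i1).
Qed.

End MatrixCorner.

Theorem mainTheorem18 (A : pzRingType) (star : A -> A) :
  is_involution star -> ~ star_symmetric star ->
  forall n : nat, (1 < n)%N -> ~ rickart (@mxstar A star n).
Proof.
move=> star_inv not_sym [|[|m]] // _ rick.
exact/not_sym/(rickart_mxstar_star_symmetric star_inv).
Qed.
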